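(* Let $\mathcal{Z}=\{z_1,\dots,z_n\}\subset\mathbb{R}^2$ be a finite set of points, let $d_{ij}$ denote the Euclidean distance between $z_i$ and $z_j$, and fix a cutoff distance $d_c>0$. Define the density of each point by $\rho_i=\sum_{j\neq i}\exp\!\left(-(d_{ij}/d_c)^2\right)$, and define $\delta_i=\min_{j:\rho_j>\rho_i} d_{ij}$ when some $j$ satisfies $\rho_j>\rho_i$, and $\delta_i=\max_{k,l} d_{kl}$ otherwise. Let $\bar{\rho}=\frac{1}{n}\sum_{j=1}^n\rho_j$. Call $z_i$ a local cluster center if $\delta_i>d_c$ and $\rho_i>\bar{\rho}$. If $z_i$ and $z_j$ are two local cluster centers with $\rho_i\neq\rho_j$, then $d_{ij}\ge d_c$. *)

From HB Require Import structures.
From mathcomp Require Import all_boot all_order all_algebra.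
From mathcomp Require Import all_classical all_reals.
From mathcomp Require Import sequences exp.
Set Implicit Arguments. Unset Strict Implicit. Unset Printing Implicit Defensive.
Import Order.TTheory GRing.Theory Num.Theory.
Local Open Scope ring_scope.

Section DPC.
Variables (R : realType) (n : nat) (z : 'I_n -> R * R) (dc : R).

Definition dist (i j : 'I_n) : R :=
  Num.sqrt (((z i).1 - (z j).1) ^+ 2 + ((z i).2 - (z j).2) ^+ 2).

Definition rho (i : 'I_n) : R :=
  \sum_(j | j != i) expR (- (dist i j / dc) ^+ 2).

(* max_{k,l} d_kl (distances are >= 0, so 0 is a neutral start) *)
Definition maxdist : R := \big[Num.max/0]_(k : 'I_n) \big[Num.max/0]_(l : 'I_n) dist k l.

Definition delta (i : 'I_n) : R :=
  match [pick j | rho i < rho j] with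
  | Some j0 => \big[Num.min/dist i j0]_(j | rho i < rho j) dist i j
  | None => maxdist
  end.

Definition rho_bar : R := (n%:R)^-1 * \sum_(j : 'I_n) rho j.

Definition local_cluster_center (i : 'I_n) : Prop :=
  dc < delta i /\ rho_bar < rho i.

End DPC.

From HB Require Import structures.
From mathcomp Require Import all_boot all_order all_algebra.
From mathcomp Require Import all_classical all_reals.
From mathcomp Require Import sequences exp.
Import Order.TTheory GRing.Theory Num.Theory.
Local Open Scope ring_scope.

(* Of two centres with different densities, the denser one is among the points
   over which the delta of the other is minimised, so their distance is at
   least that delta, which exceeds d_c. *)

Section DensityPeaks.
Variables (R : realType) (n : nat) (z : 'I_n -> R * R) (dc : R).

Lemma distC (i j : 'I_n) : dist z i j = dist z j i.
Proof. by rewrite /dist -(opprB (z j).1) -(opprB (z j).2) !sqrrN. Qed.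

Lemma delta_le_dist (i j : 'I_n) :
  rho z dc i < rho z dc j -> delta z dc i <= dist z i j.
Proof.
move=> rho_ij; rewrite /delta; case: pickP => [j0 _|no_denser].
- exact: Order.TotalTheory.bigmin_le_cond.
- by move: (no_denser j); rewrite rho_ij.
Qed.

Lemma dc_le_dist_denser (i j : 'I_n) :
  dc < delta z dc i -> rho z dc i < rho z dc j -> dc <= dist z i j.
Proof. by move=> dc_delta /delta_le_dist; apply/le_trans/ltW. Qed.

End DensityPeaks.

Theorem theorem2 (R : realType) (n : nat) (z : 'I_n -> R * R) (dc : R)
  (hdc : 0 < dc) (i j : 'I_n)
  (hi : local_cluster_center z dc i) (hj : local_cluster_center z dc j)
  (hneq : rho z dc i != rho z dc j) :
  dc <= dist z i j.
Proof.
case: hi hj => [delta_i _] [delta_j _].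
case: (ltgtP (rho z dc i) (rho z dc j)) hneq => // rho_ij _.
- exact: dc_le_dist_denser.
- by rewrite distC; apply: dc_le_dist_denser.
Qed.
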